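(* Let $R_0>0$, $\alpha\in\big(0,\frac{1}{p'\bar q}\big)$, $\vartheta\in(0,1/2)$, $\lambda_0:=\exp(\exp(\vartheta^{-1/\alpha}))$, and for $r\in(0,R_0]$ let $$\omega(r)=\frac1\vartheta\Big[\frac{1}{\log(\log(\lambda_0R_0/r))}\Big]^\alpha.$$ Define $R_{j+1}:=\exp\big(-\frac\vartheta\alpha[\vartheta\omega(R_j)]^{-1/\alpha}\big)R_j$ for $j\in\mathbb{N}_0$. Then $\omega(R_0)=1$, $$\omega(R_{j+1})\ge\omega(R_j)\Big(1-\vartheta\exp\big(-[\vartheta\omega(R_j)]^{-1/\alpha}\big)\Big)\quad\text{and}\quad\omega(R_j)\le2\omega(R_{j+1})\quad\text{for all }j\in\mathbb{N}_0.$$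
   Context: $p\ge2$, $p'=p/(p-1)$, $n\ge2$, $\bar q:=1+n/p$ if $p<n$ and $\bar q:=2$ if $p\ge n$. *)

From Stdlib Require Import Reals.
Open Scope R_scope.

Definition qbar (p : R) (n : nat) : R :=
  if Rlt_dec p (INR n) then 1 + INR n / p else 2.

Definition pconj (p : R) : R := p / (p - 1).

Definition lambda0 (al th : R) : R := exp (exp (Rpower th (- / al))).

Definition omega (al th R0 r : R) : R :=
  / th * Rpower (/ ln (ln (lambda0 al th * R0 / r))) al.

Fixpoint Rseq (al th R0 : R) (j : nat) : R :=
  match j with
  | O => R0
  | S j' => exp (- (th / al) * Rpower (th * omega al th R0 (Rseq al th R0 j')) (- / al))
            * Rseq al th R0 j'
  end.

From Stdlib Require Import Reals Lra.
Open Scope R_scope.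

(* With X := ln (λ0 R0 / r) one has [θ ω(r)]^(-1/α) = ln X, so along the sequence the
   recursion reads X_{j+1} = X_j + (θ/α) ln X_j, and X_0 = exp (θ^(-1/α)) gives ω(R_0) = 1.
   Hence ω(R_{j+1}) = ω(R_j) e^(-d_j) with d_j = α (ln ln X_{j+1} - ln ln X_j), and two uses
   of ln t <= t - 1 give 0 < d_j <= θ / X_j < θ < 1/2.  Then e^(-d_j) >= 1 - θ / X_j, which is
   the first inequality since θ exp (-ln X_j) = θ / X_j, and e^(d_j) < e^(1/2) < 2. *)

Lemma ln_pos (x : R) : 1 < x -> 0 < ln x.
Proof. intros Hx; rewrite <- ln_1; apply ln_increasing; lra. Qed.

Lemma ln_sub_le (a b : R) : 0 < a -> 0 < b -> ln a - ln b <= a / b - 1.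
Proof.
  intros Ha Hb.
  assert (Hab : 0 < a / b) by (apply Rdiv_lt_0_compat; assumption).
  pose proof (exp_ineq1_le (ln (a / b))) as Hexp.
  rewrite exp_ln in Hexp by exact Hab.
  unfold Rdiv in Hexp |- *.
  rewrite ln_mult, ln_Rinv in Hexp by (auto using Rinv_0_lt_compat).
  lra.
Qed.

Lemma exp_lt_2 (d : R) : d <= / 2 -> exp d < 2.
Proof.
  intros Hd.
  assert (Hhalf : exp d <= exp (/ 2)).
  { destruct (Rle_lt_or_eq_dec _ _ Hd) as [Hlt | ->]; [left; apply exp_increasing|]; lra. }
  assert (Hsq : exp (/ 2) * exp (/ 2) <= 3).
  { rewrite <- exp_plus; replace (/ 2 + / 2) with 1 by field; apply exp_le_3. }
  pose proof (exp_pos (/ 2)).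
  nra.
Qed.

Lemma exp_neg_small_bounds (d e : R) : 0 <= d <= e -> e < / 2 ->
  1 - e <= exp (- d) /\ 1 <= 2 * exp (- d).
Proof.
  intros Hd He. split.
  - pose proof (exp_ineq1_le (- d)); lra.
  - assert (Hlt2 : exp d < 2) by (apply exp_lt_2; lra).
    pose proof (exp_pos d).
    rewrite exp_Ropp.
    apply (Rmult_le_reg_r (exp d)); [assumption|].
    rewrite Rmult_assoc, Rinv_l by lra.
    lra.
Qed.

Lemma ln_ln_shift_bounds (X c : R) : 1 < X -> 0 < c ->
  0 < ln (ln (X + c * ln X)) - ln (ln X) <= c / X.
Proof.
  intros HX Hc.
  assert (HY : 0 < ln X) by (apply ln_pos; assumption).
  assert (HcY : 0 < c * ln X) by (apply Rmult_lt_0_compat; assumption).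
  assert (HL : ln X < ln (X + c * ln X)) by (apply ln_increasing; lra).
  split.
  - enough (ln (ln X) < ln (ln (X + c * ln X))) by lra.
    apply ln_increasing; assumption.
  - assert (HLup : ln (X + c * ln X) <= ln X * (1 + c / X)).
    { pose proof (ln_sub_le (X + c * ln X) X ltac:(lra) ltac:(lra)) as Hstep.
      replace ((X + c * ln X) / X - 1) with (ln X * (c / X)) in Hstep by (field; lra).
      lra. }
    pose proof (ln_sub_le (ln (X + c * ln X)) (ln X) ltac:(lra) HY) as Hstep.
    assert (Hratio : ln (X + c * ln X) / ln X <= 1 + c / X).
    { apply (Rmult_le_reg_r (ln X)); [assumption|].
      unfold Rdiv; rewrite Rmult_assoc, Rinv_l by lra. lra. }
    lra.
Qed.

Section Scales.

Variables al th R0 : R.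
Hypothesis Hal : 0 < al.
Hypothesis Hth : 0 < th.
Hypothesis HR0 : 0 < R0.

Definition log_ratio (r : R) : R := ln (lambda0 al th * R0 / r).

Lemma omega_Rpower_inv (r : R) : 1 < log_ratio r ->
  Rpower (th * omega al th R0 r) (- / al) = ln (log_ratio r).
Proof.
  intros HX. pose proof (ln_pos _ HX) as HY.
  unfold omega, Rpower at 2; fold (log_ratio r).
  replace (th * (/ th * exp (al * ln (/ ln (log_ratio r)))))
    with (exp (al * ln (/ ln (log_ratio r)))) by (field; lra).
  unfold Rpower; rewrite ln_exp, ln_Rinv by exact HY.
  replace (- / al * (al * - ln (ln (log_ratio r)))) with (ln (ln (log_ratio r)))
    by (field; lra).
  apply exp_ln; exact HY.
Qed.

Lemma omega_exp (r : R) : 1 < log_ratio r ->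
  omega al th R0 r = / th * exp (- al * ln (ln (log_ratio r))).
Proof.
  intros HX.
  unfold omega, Rpower; fold (log_ratio r).
  rewrite ln_Rinv by (apply ln_pos; exact HX).
  f_equal; f_equal; ring.
Qed.

Lemma log_ratio_R0 : log_ratio R0 = exp (Rpower th (- / al)).
Proof.
  unfold log_ratio, lambda0.
  replace (exp (exp (Rpower th (- / al))) * R0 / R0) with (exp (exp (Rpower th (- / al))))
    by (field; lra).
  apply ln_exp.
Qed.

Lemma log_ratio_shrink (r c : R) : 0 < r -> log_ratio (exp (- c) * r) = log_ratio r + c.
Proof.
  intros Hr. unfold log_ratio.
  pose proof (exp_pos c). pose proof (exp_pos (exp (Rpower th (- / al)))).
  replace (lambda0 al th * R0 / (exp (- c) * r)) with (lambda0 al th * R0 / r * exp c)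
    by (rewrite exp_Ropp; unfold lambda0; field; lra).
  rewrite ln_mult, ln_exp; [reflexivity| |apply exp_pos].
  unfold lambda0; apply Rdiv_lt_0_compat; [apply Rmult_lt_0_compat|]; assumption.
Qed.

Lemma Rseq_pos (j : nat) : 0 < Rseq al th R0 j.
Proof.
  induction j as [|j IH]; simpl; [assumption|].
  apply Rmult_lt_0_compat; [apply exp_pos | exact IH].
Qed.

Lemma log_ratio_Rseq_S (j : nat) : 1 < log_ratio (Rseq al th R0 j) ->
  log_ratio (Rseq al th R0 (S j))
  = log_ratio (Rseq al th R0 j) + th / al * ln (log_ratio (Rseq al th R0 j)).
Proof.
  intros HX. simpl.
  rewrite omega_Rpower_inv by exact HX.
  rewrite <- Ropp_mult_distr_l.
  apply log_ratio_shrink, Rseq_pos.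
Qed.

Lemma log_ratio_Rseq_gt1 (j : nat) : 1 < log_ratio (Rseq al th R0 j).
Proof.
  induction j as [|j IH].
  - simpl; rewrite log_ratio_R0, <- exp_0.
    apply exp_increasing; unfold Rpower; apply exp_pos.
  - rewrite log_ratio_Rseq_S by exact IH.
    pose proof (ln_pos _ IH).
    assert (0 < th / al * ln (log_ratio (Rseq al th R0 j))).
    { apply Rmult_lt_0_compat; [apply Rdiv_lt_0_compat|]; assumption. }
    lra.
Qed.

Lemma omega_R0 : omega al th R0 R0 = 1.
Proof.
  assert (HX : 1 < log_ratio R0) by exact (log_ratio_Rseq_gt1 0).
  rewrite omega_exp, log_ratio_R0, !ln_exp by exact HX.
  unfold Rpower; rewrite ln_exp.
  replace (- al * (- / al * ln th)) with (ln th) by (field; lra).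
  rewrite exp_ln by exact Hth.
  field; lra.
Qed.

Lemma omega_Rseq_S (j : nat) :
  let X := log_ratio (Rseq al th R0 j) in
  omega al th R0 (Rseq al th R0 (S j))
  = omega al th R0 (Rseq al th R0 j)
    * exp (- (al * (ln (ln (X + th / al * ln X)) - ln (ln X)))).
Proof.
  intros X.
  pose proof (log_ratio_Rseq_gt1 j) as HX.
  rewrite !omega_exp by (exact HX || apply log_ratio_Rseq_gt1).
  rewrite log_ratio_Rseq_S by exact HX; fold X.
  rewrite Rmult_assoc, <- exp_plus.
  f_equal; f_equal; ring.
Qed.

End Scales.

Theorem claim4p2 (p : R) (n : nat) (R0 al th : R) :
  2 <= p -> (2 <= n)%nat -> 0 < R0 ->
  0 < al -> al < / (pconj p * qbar p n) ->
  0 < th -> th < / 2 ->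
  omega al th R0 R0 = 1 /\
  (forall j : nat,
     omega al th R0 (Rseq al th R0 (S j)) >=
       omega al th R0 (Rseq al th R0 j) *
       (1 - th * exp (- Rpower (th * omega al th R0 (Rseq al th R0 j)) (- / al))) /\
     omega al th R0 (Rseq al th R0 j) <= 2 * omega al th R0 (Rseq al th R0 (S j))).
Proof.
  intros _ _ HR0 Hal _ Hth Hth2.
  split; [exact (omega_R0 al th R0 Hal Hth HR0)|].
  intros j.
  pose proof (log_ratio_Rseq_gt1 al th R0 Hal Hth HR0 j) as HX.
  rewrite omega_Rseq_S, omega_Rpower_inv by assumption.
  set (X := log_ratio al th R0 (Rseq al th R0 j)) in *.
  rewrite (exp_Ropp (ln X)), exp_ln by lra.
  set (w := omega al th R0 (Rseq al th R0 j)).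
  assert (Hw : 0 <= w).
  { unfold w; rewrite omega_exp by assumption.
    left; apply Rmult_lt_0_compat; [apply Rinv_0_lt_compat; exact Hth | apply exp_pos]. }
  destruct (ln_ln_shift_bounds X (th / al) HX ltac:(apply Rdiv_lt_0_compat; lra))
    as [Hd0 Hd1].
  set (d := al * (ln (ln (X + th / al * ln X)) - ln (ln X))).
  assert (Hd : 0 <= d <= th * / X).
  { unfold d; split; [left; apply Rmult_lt_0_compat; assumption|].
    apply (Rmult_le_compat_l al) in Hd1; [|lra].
    replace (al * (th / al / X)) with (th * / X) in Hd1 by (field; lra).
    exact Hd1. }
  assert (HthX : th * / X < / 2).
  { enough (th * / X <= th) by lra.
    rewrite <- (Rmult_1_r th) at 2; apply Rmult_le_compat_l; [lra|].
    rewrite <- Rinv_1; left; apply Rinv_lt_contravar; lra. }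
  destruct (exp_neg_small_bounds d (th * / X) Hd HthX) as [Hlow Hup].
  split; [apply Rle_ge|]; nra.
Qed.
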